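(* Let $C$ be a copula and define $C^*(u,v)=u-C(u,1-v)$ and $C^{**}(u,v)=v-C(1-u,v)$ for $u,v\in[0,1]$. Then for all $p,q\in[0,1]$, $$\lambda^{C^*}(q|p)=\lambda^C(1-q|p),\qquad \lambda^{C^{**}}(q|p)=\lambda^C(q|1-p),$$ in the sense that in each identity one side exists if and only if the other does, and then they are equal.
   Context: If $(U,V)$ has copula $C$, then $C^*$ and $C^{**}$ are the copulas of $(U,1-V)$ and $(1-U,V)$. For a copula $C$ (bivariate distribution function on $[0,1]^2$ with uniform margins) and $p,q\in[0,1]$, the $(p,q)$-quantile dependence coefficient is $\lambda^C(q|p)=\lim_{t\to0^+}\frac{V_C([(p-t)^+,(p+t)^-]\times[(q-t)^+,(q+t)^-])}{(p+t)^- - (p-t)^+}$ when the limit exists, where $a^+=\max(a,0)$, $a^-=1-(1-a)^+$, and $V_C([u_1,u_2]\times[v_1,v_2])=C(u_2,v_2)-C(u_2,v_1)-C(u_1,v_2)+C(u_1,v_1)$. *)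

From Stdlib Require Import Reals.
From Coquelicot Require Import Coquelicot.
Open Scope R_scope.

Definition pos_part (a : R) : R := Rmax a 0.
Definition neg_part (a : R) : R := 1 - pos_part (1 - a).

Definition VC (C : R -> R -> R) (u1 u2 v1 v2 : R) : R :=
  C u2 v2 - C u2 v1 - C u1 v2 + C u1 v1.

Definition in01 (x : R) : Prop := 0 <= x <= 1.

(* A (bivariate) copula: a function on [0,1]^2 that is grounded, has uniform
   margins and is 2-increasing (values outside [0,1]^2 are irrelevant). *)
Definition is_copula (C : R -> R -> R) : Prop :=
  (forall u, in01 u -> C u 0 = 0 /\ C 0 u = 0 /\ C u 1 = u /\ C 1 u = u) /\
  (forall u1 u2 v1 v2, in01 u1 -> in01 u2 -> in01 v1 -> in01 v2 ->
     u1 <= u2 -> v1 <= v2 -> 0 <= VC C u1 u2 v1 v2).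

Definition Cstar (C : R -> R -> R) : R -> R -> R := fun u v => u - C u (1 - v).
Definition Cstar2 (C : R -> R -> R) : R -> R -> R := fun u v => v - C (1 - u) v.

(* the ratio whose limit as t -> 0+ defines lambda^C(q|p) *)
Definition qd_ratio (C : R -> R -> R) (p q t : R) : R :=
  VC C (pos_part (p - t)) (neg_part (p + t)) (pos_part (q - t)) (neg_part (q + t))
  / (neg_part (p + t) - pos_part (p - t)).

Definition is_qdc (C : R -> R -> R) (p q l : R) : Prop :=
  filterlim (qd_ratio C p q) (at_right 0) (locally l).

From Stdlib Require Import Reals FunctionalExtensionality.
From Coquelicot Require Import Coquelicot.
Open Scope R_scope.

(* The reflection v |-> 1 - v maps the window [(q-t)^+, (q+t)^-] onto
   [(1-q-t)^+, (1-q+t)^-], and the C^*-volume of a rectangle is the C-volume of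
   its image under this reflection in the second coordinate (for C^**, in the
   first coordinate, where the window width is also preserved).  Hence the
   ratios defining the coefficients coincide for every t, so do their limits;
   no property of copulas is needed. *)

Lemma pos_part_reflect (x : R) : pos_part (1 - x) = 1 - neg_part x.
Proof. unfold neg_part; ring. Qed.

Lemma neg_part_reflect (x : R) : neg_part (1 - x) = 1 - pos_part x.
Proof. unfold neg_part; now replace (1 - (1 - x)) with x by ring. Qed.

Lemma VC_Cstar (C : R -> R -> R) (u1 u2 v1 v2 : R) :
  VC (Cstar C) u1 u2 v1 v2 = VC C u1 u2 (1 - v2) (1 - v1).
Proof. unfold VC, Cstar; ring. Qed.

Lemma VC_Cstar2 (C : R -> R -> R) (u1 u2 v1 v2 : R) :
  VC (Cstar2 C) u1 u2 v1 v2 = VC C (1 - u2) (1 - u1) v1 v2.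
Proof. unfold VC, Cstar2; ring. Qed.

Lemma reflect_window (q t : R) :
  1 - neg_part (q + t) = pos_part (1 - q - t) /\
  1 - pos_part (q - t) = neg_part (1 - q + t).
Proof.
  rewrite <- pos_part_reflect, <- neg_part_reflect.
  split; f_equal; ring.
Qed.

Lemma qd_ratio_Cstar (C : R -> R -> R) (p q : R) :
  qd_ratio (Cstar C) p q = qd_ratio C p (1 - q).
Proof.
  apply functional_extensionality; intro t.
  destruct (reflect_window q t) as [Hlo Hhi].
  unfold qd_ratio; now rewrite VC_Cstar, Hlo, Hhi.
Qed.

Lemma qd_ratio_Cstar2 (C : R -> R -> R) (p q : R) :
  qd_ratio (Cstar2 C) p q = qd_ratio C (1 - p) q.
Proof.
  apply functional_extensionality; intro t.
  destruct (reflect_window p t) as [Hlo Hhi].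
  unfold qd_ratio; rewrite VC_Cstar2, Hlo, Hhi.
  f_equal; rewrite <- Hlo, <- Hhi; ring.
Qed.

Theorem proposition6 (C : R -> R -> R) (p q : R) :
  is_copula C -> in01 p -> in01 q ->
  (forall l : R, is_qdc (Cstar C) p q l <-> is_qdc C p (1 - q) l) /\
  (forall l : R, is_qdc (Cstar2 C) p q l <-> is_qdc C (1 - p) q l).
Proof.
  intros _ _ _; unfold is_qdc.
  rewrite qd_ratio_Cstar, qd_ratio_Cstar2.
  split; reflexivity.
Qed.
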